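(* Let $E$ and $F$ be locally convex spaces over $K$ and let $A\subseteq E$ be a c-precompact set. Then: (1) for every continuous linear map $f:E\to F$, the set $f(A)$ is c-precompact in $F$; (2) the closure $\overline{A}$ of $A$ in $E$ is c-precompact.
   Context: $K$ is a field complete with respect to a non-trivial non-archimedean absolute value $|\cdot|$, with $B_K=\{x\in K:|x|\le 1\}$. A locally convex space over $K$ is a topological $K$-vector space whose topology is defined by a family of non-archimedean seminorms. A subset $A$ is absolutely convex if it is a $B_K$-submodule; a set is convex if it has the form $x+A$ with $A$ absolutely convex. For an absolutely convex set $A$, a convex filter on $A$ is a filter on $A$ having a base consisting of convex sets; a maximal convex filter on $A$ is a convex filter on $A$ not properly contained in any other convex filter on $A$. A filter $\mathcal F$ on $A$ is Cauchy if for every zero neighbourhood $U$ of $E$ there is $X\in\mathcal F$ with $X-X\subseteq U$. An absolutely convex set $A$ is c-precompact if every maximal convex filter on $A$ is a Cauchy filter. *)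

From HB Require Import structures.
From mathcomp Require Import all_boot all_order all_algebra.
From mathcomp Require Import boolp classical_sets reals.
From Stdlib Require Lists.List.
Set Implicit Arguments. Unset Strict Implicit. Unset Printing Implicit Defensive.
Import Order.TTheory GRing.Theory Num.Theory.
Local Open Scope ring_scope.
Local Open Scope classical_set_scope.

Definition nonarch_abs {R : realType} {K : fieldType} (abs : K -> R) : Prop :=
  [/\ forall x, 0 <= abs x,
      forall x, abs x = 0 <-> x = 0,
      forall x y, abs (x * y) = abs x * abs y &
      forall x y, abs (x + y) <= Num.max (abs x) (abs y)].

Definition nontrivial_abs {R : realType} {K : fieldType} (abs : K -> R) : Prop :=
  exists x, abs x != 0 /\ abs x != 1.

Definition complete_abs {R : realType} {K : fieldType} (abs : K -> R) : Prop :=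
  forall u : nat -> K,
    (forall e : R, 0 < e -> exists N : nat, forall m n : nat,
        (N <= m)%N -> (N <= n)%N -> abs (u m - u n) < e) ->
    exists l : K, forall e : R, 0 < e -> exists N : nat, forall n : nat,
        (N <= n)%N -> abs (u n - l) < e.

Definition nonarch_seminorm {R : realType} {K : fieldType} (abs : K -> R)
  (E : lmodType K) (p : E -> R) : Prop :=
  [/\ forall x, 0 <= p x,
      forall x y, p (x + y) <= Num.max (p x) (p y) &
      forall (a : K) x, p (a *: x) = abs a * p x].

(* Zero neighbourhoods of the locally convex topology defined by the
   family of seminorms p : I -> E -> R. *)
Definition na_zero_nbhd {R : realType} {K : fieldType} {E : lmodType K} {I : Type}
  (p : I -> E -> R) (U : set E) : Prop :=
  exists (s : seq I) (e : R), 0 < e /\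
    forall x, (forall i, Stdlib.Lists.List.In i s -> p i x < e) -> U x.

(* Absolutely convex = B_K-submodule. *)
Definition na_absconvex {R : realType} {K : fieldType} (abs : K -> R)
  {E : lmodType K} (A : set E) : Prop :=
  [/\ A 0,
      forall x y, A x -> A y -> A (x + y) &
      forall (a : K) x, abs a <= 1 -> A x -> A (a *: x)].

Definition na_convex {R : realType} {K : fieldType} (abs : K -> R)
  {E : lmodType K} (X : set E) : Prop :=
  exists (x : E) (A : set E), na_absconvex abs A /\ X = (fun y => x + y) @` A.

Definition na_filter_on {E : Type} (A : set E) (Fl : set (set E)) : Prop :=
  [/\ Fl A,
      forall X, Fl X -> X `<=` A,
      ~ Fl set0,
      forall X Y, Fl X -> Fl Y -> Fl (X `&` Y) &
      forall X Y, Fl X -> X `<=` Y -> Y `<=` A -> Fl Y].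

Definition na_convex_filter {R : realType} {K : fieldType} (abs : K -> R)
  {E : lmodType K} (A : set E) (Fl : set (set E)) : Prop :=
  na_filter_on A Fl /\
  forall X, Fl X -> exists2 C, Fl C /\ na_convex abs C & C `<=` X.

Definition na_max_convex_filter {R : realType} {K : fieldType} (abs : K -> R)
  {E : lmodType K} (A : set E) (Fl : set (set E)) : Prop :=
  na_convex_filter abs A Fl /\
  forall G, na_convex_filter abs A G -> Fl `<=` G -> G = Fl.

Definition na_cauchy {R : realType} {K : fieldType} {E : lmodType K} {I : Type}
  (p : I -> E -> R) (Fl : set (set E)) : Prop :=
  forall U, na_zero_nbhd p U ->
    exists2 X, Fl X & forall x y, X x -> X y -> U (x - y).

Definition c_precompact {R : realType} {K : fieldType} (abs : K -> R)
  {E : lmodType K} {I : Type} (p : I -> E -> R) (A : set E) : Prop :=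
  na_absconvex abs A /\
  forall Fl, na_max_convex_filter abs A Fl -> na_cauchy p Fl.

Definition na_closure {R : realType} {K : fieldType} {E : lmodType K} {I : Type}
  (p : I -> E -> R) (A : set E) : set E :=
  fun x => forall U, na_zero_nbhd p U -> exists2 a, A a & U (a - x).

Definition na_continuous {R : realType} {K : fieldType} {E F : lmodType K}
  {IE IF : Type} (pE : IE -> E -> R) (pF : IF -> F -> R) (f : E -> F) : Prop :=
  forall x V, na_zero_nbhd pF V ->
    exists2 U, na_zero_nbhd pE U & forall y, U (y - x) -> V (f y - f x).

(* Both parts transport maximal convex filters to A and back.  Let Fl be a
   maximal convex filter on f(A) (resp. on the closure of A).  The traces on A
   of the sets f^-1(C) (resp. of the thickenings C + U, with U an absolutely
   convex zero neighbourhood), for C a convex member of Fl, form a base of a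
   convex filter on A; by Zorn's lemma it lies in a maximal convex filter H on
   A, which is Cauchy.  The sets f(X) (resp. C ∩ (X + U)), for X a convex
   member of H, form a base of a convex filter containing Fl, hence equal to Fl
   by maximality; it is Cauchy because H is and f is continuous (resp. because
   (X + V) - (X + V) ⊆ (X - X) + V for V absolutely convex).  All convexity
   claims rest on the non-archimedean fact that a nonempty intersection of
   convex sets is convex. *)

From mathcomp Require Import all_boot all_order all_algebra.
From mathcomp Require Import boolp classical_sets reals.
From Stdlib Require Lists.List.
Set Implicit Arguments.
Unset Strict Implicit.
Unset Printing Implicit Defensive.

Import Order.TTheory GRing.Theory Num.Theory.
Local Open Scope ring_scope.
Local Open Scope classical_set_scope.

Section NonArchimedean.
Variables (R : realType) (K : fieldType) (abs : K -> R).
Hypothesis habs : nonarch_abs abs.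

Lemma nonarch_abs0 : abs 0 = 0.
Proof. by case: habs => _ abs_eq0 _ _; apply/abs_eq0. Qed.

Lemma nonarch_abs1 : abs 1 = 1.
Proof.
case: habs => _ abs_eq0 absM _.
have abs1_neq0 : abs 1 != 0 by apply/eqP => /abs_eq0/eqP; rewrite oner_eq0.
by apply: (mulfI abs1_neq0); rewrite -absM !mulr1.
Qed.

Lemma nonarch_absN1 : abs (-1) = 1.
Proof.
case: habs => abs_ge0 _ absM _; apply/eqP.
by rewrite -sqrp_eq1 // expr2 -absM mulrNN mulr1 nonarch_abs1.
Qed.

Section Convexity.
Variable E : lmodType K.
Implicit Types (B U X Y : set E) (x y : E).

Lemma absconvexD B x y : na_absconvex abs B -> B x -> B y -> B (x + y).
Proof. by case=> _ BD _; apply: BD. Qed.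

Lemma absconvexN B x : na_absconvex abs B -> B x -> B (- x).
Proof. by case=> _ _ BZ Bx; rewrite -scaleN1r; apply: BZ; rewrite ?nonarch_absN1. Qed.

Lemma absconvexB B x y : na_absconvex abs B -> B x -> B y -> B (x - y).
Proof. by move=> hB Bx By; apply: absconvexD hB Bx (absconvexN hB By). Qed.

Lemma absconvexI B1 B2 :
  na_absconvex abs B1 -> na_absconvex abs B2 -> na_absconvex abs (B1 `&` B2).
Proof.
move=> [B10 B1D B1Z] [B20 B2D B2Z]; split=> //.
- by move=> x y [? ?] [? ?]; split; [apply: B1D | apply: B2D].
- by move=> a x ha [? ?]; split; [apply: B1Z | apply: B2Z].
Qed.

Definition addset X Y : set E := [set x + y | x in X & y in Y].

Lemma absconvex_addset B1 B2 :
  na_absconvex abs B1 -> na_absconvex abs B2 -> na_absconvex abs (addset B1 B2).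
Proof.
move=> [B10 B1D B1Z] [B20 B2D B2Z]; split.
- by exists 0 => //; exists 0; rewrite ?addr0.
- move=> _ _ [a B1a [u B2u <-]] [b B1b [v B2v <-]].
  by exists (a + b); [apply: B1D | exists (u + v); [apply: B2D | rewrite addrACA]].
- move=> c _ hc [a B1a [u B2u <-]].
  by exists (c *: a); [apply: B1Z | exists (c *: u); [apply: B2Z | rewrite scalerDr]].
Qed.

Lemma absconvex_convex B : na_absconvex abs B -> na_convex abs B.
Proof.
move=> hB; exists 0, B; split=> //.
by under eq_fun do rewrite add0r; rewrite image_id.
Qed.

Lemma convex_neq0 X : na_convex abs X -> X !=set0.
Proof. by move=> [x [B [[B0 _ _] ->]]]; exists (x + 0), 0. Qed.

(* In the non-archimedean setting any point of a convex set can serve as its centre. *)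
Lemma convex_at X x :
  X x -> na_convex abs X <-> na_absconvex abs [set y | X (x + y)].
Proof.
move=> Xx; split=> [[z [B [hB eX]]]|hX]; last first.
  exists x, [set y | X (x + y)]; split=> //.
  apply/seteqP; split=> [y Xy|_ [y Xy <-] //].
  by exists (y - x); rewrite /= addrC subrK.
suff -> : [set y | X (x + y)] = B by [].
move: Xx; rewrite eX => -[b0 Bb0 <-]; apply/seteqP; split=> y.
  move=> [b Bb /eqP]; rewrite -addrA (inj_eq (addrI z)) => /eqP eb.
  by have := absconvexB hB Bb Bb0; rewrite eb addrC addrK.
by move=> By; exists (b0 + y); rewrite ?addrA //; apply: absconvexD.
Qed.

Lemma convexI X Y z :
  na_convex abs X -> na_convex abs Y -> (X `&` Y) z -> na_convex abs (X `&` Y).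
Proof.
move=> + + [Xz Yz]; rewrite (convex_at Xz) (convex_at Yz) (convex_at (conj Xz Yz)).
exact: absconvexI.
Qed.

Lemma convex_addset X U :
  na_convex abs X -> na_absconvex abs U -> na_convex abs (addset X U).
Proof.
move=> cX hU; have [x Xx] := convex_neq0 cX.
have XUx : addset X U x by exists x => //; exists 0; rewrite ?addr0 //; case: hU.
rewrite (convex_at XUx); move: cX; rewrite (convex_at Xx) => hX.
suff -> : [set y | addset X U (x + y)] = addset [set y | X (x + y)] U.
  exact: absconvex_addset.
apply/seteqP; split=> y.
  move=> [x' Xx' [u Uu exy]]; exists (x' - x); first by rewrite /= addrC subrK.
  by exists u => //; rewrite addrAC exy addrAC subrr add0r.
by move=> [a Xa [u Uu <-]]; exists (x + a) => //; exists u; rewrite // addrA.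
Qed.

End Convexity.

Section ConvexFilters.
Variable E : lmodType K.
Implicit Types (A X Y : set E) (B Fl G : set (set E)).

Lemma filter_neq0 A Fl X : na_filter_on A Fl -> Fl X -> X !=set0.
Proof. by move=> [_ _ Fl0 _ _] FlX; apply/set0P/eqP => X0; rewrite X0 in FlX. Qed.

Definition convex_members Fl := [set C | Fl C /\ na_convex abs C].

Lemma convex_members_neq0 A Fl : na_convex_filter abs A Fl -> convex_members Fl !=set0.
Proof. by move=> [[FlA _ _ _ _] FlC]; have [C FlC' _] := FlC A FlA; exists C. Qed.

Lemma convex_membersI A Fl C1 C2 : na_convex_filter abs A Fl ->
  convex_members Fl C1 -> convex_members Fl C2 ->
  exists2 C, convex_members Fl C & C `<=` C1 `&` C2.
Proof. by move=> [[_ _ _ FlI _] FlC] [FlC1 _] [FlC2 _]; apply: FlC; apply: FlI. Qed.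

Definition filter_of_base A B : set (set E) :=
  [set Y | Y `<=` A /\ exists2 X, B X & X `<=` Y].

Lemma convex_filter_of_base A B :
  B !=set0 -> (forall X, B X -> X `<=` A) -> (forall X, B X -> na_convex abs X) ->
  (forall X Y, B X -> B Y -> exists2 Z, B Z & Z `<=` X `&` Y) ->
  na_convex_filter abs A (filter_of_base A B).
Proof.
move=> [X0 BX0] BA Bconvex BI; split; first split.
- by split=> //; exists X0 => //; apply: BA.
- by move=> Y [].
- by move=> [_ [X /Bconvex /convex_neq0 [x Xx] /(_ x Xx)]].
- move=> Y1 Y2 [Y1A [X1 BX1 XY1]] [_ [X2 BX2 XY2]]; split; first by move=> y [/Y1A].
  have [Z BZ ZX] := BI _ _ BX1 BX2.
  by exists Z => // z /ZX[/XY1 ? /XY2 ?]; split.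
- move=> Y1 Y2 [_ [X BX XY1]] Y12 Y2A; split=> //.
  by exists X => //; apply: subset_trans Y12.
- move=> Y [_ [X BX XY]]; exists X => //.
  by split; [split; [apply: BA | exists X] | apply: Bconvex].
Qed.

Lemma convex_filter_bigcup A (Fs : set (set (set E))) :
  Fs !=set0 -> (forall Fl, Fs Fl -> na_convex_filter abs A Fl) ->
  total_on Fs subset -> na_convex_filter abs A (\bigcup_(Fl in Fs) Fl).
Proof.
move=> [Fl0 FsFl0] Fsconvex Fstot; split; first split.
- by exists Fl0 => //; have [[]] := Fsconvex _ FsFl0.
- by move=> X [Fl /Fsconvex[[_ FlA _ _ _] _]]; apply: FlA.
- by move=> [Fl /Fsconvex[[_ _ Fl_set0 _ _] _]].
- move=> X Y [Fl1 FsFl1 Fl1X] [Fl2 FsFl2 Fl2Y].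
  have [[_ _ _ Fl1I _] _] := Fsconvex _ FsFl1.
  have [[_ _ _ Fl2I _] _] := Fsconvex _ FsFl2.
  have [Fl12|Fl21] := Fstot _ _ FsFl1 FsFl2.
    by exists Fl2 => //; apply: Fl2I => //; apply: Fl12.
  by exists Fl1 => //; apply: Fl1I => //; apply: Fl21.
- move=> X Y [Fl FsFl FlX] XY YA; exists Fl => //.
  by have [[_ _ _ _ FlU] _] := Fsconvex _ FsFl; apply: FlU XY YA.
- move=> X [Fl FsFl FlX]; have [_ FlC] := Fsconvex _ FsFl.
  by have [C [FlC' cC] CX] := FlC X FlX; exists C => //; split=> //; exists Fl.
Qed.

Lemma exists_max_convex_filter A G : na_convex_filter abs A G ->
  exists2 Fl, na_max_convex_filter abs A Fl & G `<=` Fl.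
Proof.
move=> cG.
(* [set0] is allowed so that the empty chain has an upper bound. *)
pose P Fl := Fl = set0 \/ na_convex_filter abs A Fl /\ G `<=` Fl.
have [Fl [PFl Flmax]] : exists Fl, P Fl /\ forall Fl', Fl `<` Fl' -> ~ P Fl'.
  apply: Zorn_bigcup => Fs FsP Fstot.
  have [[Fl FsFl Fl_neq0]|Fs0] := pselect (exists2 Fl, Fs Fl & Fl !=set0); last first.
    left; apply/seteqP; split=> // X [Fl FsFl FlX].
    by apply: Fs0; exists Fl => //; exists X.
  pose Fs' := Fs `&` [set Fl | Fl !=set0].
  have FsP' Fl' : Fs' Fl' -> na_convex_filter abs A Fl' /\ G `<=` Fl'.
    by move=> [/FsP[->|//] [X []]].
  have -> : \bigcup_(Fl in Fs) Fl = \bigcup_(Fl in Fs') Fl.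
    apply/seteqP; split=> X [Fl' FsFl' Fl'X]; exists Fl' => //; last by case: FsFl'.
    by split=> //; exists X.
  right; split.
    apply: convex_filter_bigcup; first by exists Fl.
      by move=> Fl' /FsP'[].
    by move=> Fl1 Fl2 [FsFl1 _] [FsFl2 _]; apply: Fstot.
  by move=> X GX; exists Fl; [split | apply: (proj2 (FsP' Fl _))].
case: PFl => [Fl0|[cFl GFl]].
  have [[GA _ _ _ _] _] := cG.
  exfalso; apply: (Flmax G); first by rewrite Fl0; split=> [X []|/(_ A GA)].
  by right; split.
exists Fl => //; split=> // Fl' cFl' FlFl'; apply/seteqP; split=> //.
apply: contrapT => Fl'Fl; apply: (Flmax Fl'); first by split.
by right; split=> //; apply: subset_trans FlFl'.
Qed.

End ConvexFilters.

Section LinearMaps.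
Variables (E F : lmodType K) (f : {linear E -> F}).

Lemma absconvex_image (B : set E) : na_absconvex abs B -> na_absconvex abs (f @` B).
Proof.
move=> [B0 BD BZ]; split.
- by exists 0 => //; rewrite linear0.
- by move=> _ _ [x Bx <-] [y By <-]; exists (x + y); [apply: BD | rewrite linearD].
- by move=> a _ ha [x Bx <-]; exists (a *: x); [apply: BZ | rewrite linearZ].
Qed.

Lemma absconvex_preimage (B : set F) : na_absconvex abs B -> na_absconvex abs (f @^-1` B).
Proof.
move=> [B0 BD BZ]; split=> /=.
- by rewrite linear0.
- by move=> x y Bfx Bfy; rewrite linearD; apply: BD.
- by move=> a x ha Bfx; rewrite linearZ; apply: BZ.
Qed.

Lemma convex_image (X : set E) : na_convex abs X -> na_convex abs (f @` X).
Proof.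
move=> cX; have [x Xx] := convex_neq0 cX.
have fXfx : (f @` X) (f x) by exists x.
rewrite (convex_at fXfx); move: cX; rewrite (convex_at Xx) => /absconvex_image.
suff -> : [set w | (f @` X) (f x + w)] = f @` [set y | X (x + y)] by [].
apply/seteqP; split=> [w [x' Xx' efx']|_ [y Xxy <-]]; last first.
  by exists (x + y); rewrite // linearD.
exists (x' - x); first by rewrite /= addrC subrK.
by rewrite linearB efx' addrC addKr.
Qed.

Lemma convex_preimage (Y : set F) x :
  na_convex abs Y -> Y (f x) -> na_convex abs (f @^-1` Y).
Proof.
move=> cY Yfx; rewrite (convex_at (Yfx : (f @^-1` Y) x)).
move: cY; rewrite (convex_at Yfx) => /absconvex_preimage.
suff -> : [set y | (f @^-1` Y) (x + y)] = f @^-1` [set w | Y (f x + w)] by [].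
by apply/seteqP; split=> y; rewrite /= linearD.
Qed.

End LinearMaps.

Section SeminormTopology.
Variables (E : lmodType K) (I : Type) (p : I -> E -> R).
Hypothesis hp : forall i, nonarch_seminorm abs (p i).

Definition seminorm_ball (s : seq I) (e : R) : set E :=
  [set x | forall i, List.In i s -> p i x < e].

Lemma absconvex_seminorm_ball s e : 0 < e -> na_absconvex abs (seminorm_ball s e).
Proof.
move=> e_gt0; split.
- move=> i _; have [_ _ pZ] := hp i.
  by rewrite -(scale0r 0) pZ nonarch_abs0 mul0r.
- move=> x y px py i si; have [_ pD _] := hp i.
  by apply: le_lt_trans (pD x y) _; rewrite gt_max px ?py.
- move=> a x ha px i si; have [p_ge0 _ pZ] := hp i.
  by rewrite pZ; apply: le_lt_trans (px i si); apply: ler_piMl.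
Qed.

Definition absconvex_zero_nbhd : set (set E) :=
  [set U | na_zero_nbhd p U /\ na_absconvex abs U].

Lemma absconvex_zero_nbhd_sub U :
  na_zero_nbhd p U -> exists2 V, absconvex_zero_nbhd V & V `<=` U.
Proof.
move=> [s [e [e_gt0 sU]]]; exists (seminorm_ball s e) => //.
by split; [exists s, e | apply: absconvex_seminorm_ball].
Qed.

Lemma absconvex_zero_nbhdT : absconvex_zero_nbhd [set: E].
Proof. by split; [exists [::], 1; rewrite ltr01 | by []]. Qed.

Lemma absconvex_zero_nbhdI U V :
  absconvex_zero_nbhd U -> absconvex_zero_nbhd V -> absconvex_zero_nbhd (U `&` V).
Proof.
move=> [[s1 [e1 [e1_gt0 s1U]]] cU] [[s2 [e2 [e2_gt0 s2V]]] cV].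
split; last exact: absconvexI.
exists (s1 ++ s2), (Num.min e1 e2); split=> [|x x_small]; first by rewrite lt_min e1_gt0.
split; [apply: s1U | apply: s2V] => i si; apply: lt_le_trans (x_small i _) _.
- by apply: List.in_or_app; left.
- by rewrite ge_min lexx.
- by apply: List.in_or_app; right.
- by rewrite ge_min lexx orbT.
Qed.

Lemma absconvex_closure A : na_absconvex abs A -> na_absconvex abs (na_closure p A).
Proof.
move=> [A0 AD AZ]; split.
- move=> U /absconvex_zero_nbhd_sub[V [_ [V0 _ _]] VU].
  by exists 0 => //; apply: VU; rewrite subr0.
- move=> x y clx cly U /absconvex_zero_nbhd_sub[V [nV cV] VU].
  have [a Aa Vax] := clx V nV; have [b Ab Vby] := cly V nV.
  exists (a + b); first exact: AD.
  by apply: VU; rewrite opprD addrACA; apply: absconvexD.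
- move=> c x hc clx U /absconvex_zero_nbhd_sub[V [nV [_ _ VZ]] VU].
  have [a Aa Vax] := clx V nV.
  by exists (c *: a); [apply: AZ | apply: VU; rewrite -scalerBr; apply: VZ].
Qed.

Definition thickenings (Bs : set (set E)) : set (set E) :=
  [set addset X U | X in Bs & U in absconvex_zero_nbhd].

Lemma thickenings_neq0 S G :
  na_convex_filter abs S G -> thickenings (convex_members G) !=set0.
Proof.
move=> cG; have [X cX] := convex_members_neq0 cG.
by exists (addset X setT), X => //; exists setT => //; apply: absconvex_zero_nbhdT.
Qed.

Lemma thickeningsI S G Y1 Y2 : na_convex_filter abs S G ->
  thickenings (convex_members G) Y1 -> thickenings (convex_members G) Y2 ->
  exists2 Y, thickenings (convex_members G) Y & Y `<=` Y1 `&` Y2.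
Proof.
move=> cG [X1 cX1 [U1 nU1 <-]] [X2 cX2 [U2 nU2 <-]].
have [X cX X12] := convex_membersI cG cX1 cX2.
exists (addset X (U1 `&` U2)).
  by exists X => //; exists (U1 `&` U2) => //; apply: absconvex_zero_nbhdI.
by move=> _ [x /X12[X1x X2x] [u [U1u U2u] <-]]; split; exists x => //; exists u.
Qed.

Lemma convex_filter_closure_trace A Fl : na_absconvex abs A ->
  na_convex_filter abs (na_closure p A) Fl ->
  na_convex_filter abs A
    (filter_of_base A [set A `&` Y | Y in thickenings (convex_members Fl)]).
Proof.
move=> hA cFl; have [[_ FlS _ _ _] _] := cFl; apply: convex_filter_of_base.
- by have [Y tY] := thickenings_neq0 cFl; exists (A `&` Y), Y.
- by move=> _ [Y _ <-] x [].
- move=> _ [_ [C [FlC cC] [U [nU cU] <-]] <-].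
  have [c Cc] := filter_neq0 cFl.1 FlC.
  have [a Aa Uac] := FlS C FlC c Cc U nU.
  apply: (convexI (absconvex_convex hA) (convex_addset cC cU) (z := a)); split=> //.
  by exists c => //; exists (a - c); rewrite // addrC subrK.
- move=> _ _ [Y1 tY1 <-] [Y2 tY2 <-]; have [Y tY Y12] := thickeningsI cFl tY1 tY2.
  by exists (A `&` Y); [exists Y | move=> x [Ax /Y12[]]].
Qed.

Lemma convex_filter_closure_base A Fl H :
  na_convex_filter abs (na_closure p A) Fl -> na_convex_filter abs A H ->
  filter_of_base A [set A `&` Y | Y in thickenings (convex_members Fl)] `<=` H ->
  na_convex_filter abs (na_closure p A) (filter_of_base (na_closure p A)
    [set C `&` Y | C in convex_members Fl & Y in thickenings (convex_members H)]).
Proof.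
move=> cFl cH traceH; have [[_ FlS _ _ _] _] := cFl; apply: convex_filter_of_base.
- have [C cC] := convex_members_neq0 cFl; have [Y tY] := thickenings_neq0 cH.
  by exists (C `&` Y), C => //; exists Y.
- by move=> _ [C [FlC _] [Y _ <-]] x [/(FlS C FlC)].
- move=> _ [C [FlC cC] [_ [X [HX cX] [U [nU cU] <-]] <-]].
  have [[_ _ _ HI _] _] := cH.
  have HXtrace : H (X `&` (A `&` addset C U)).
    apply: HI => //; apply: traceH; split; first by move=> x [].
    exists (A `&` addset C U) => //.
    by exists (addset C U) => //; exists C => //; exists U.
  have [a [Xa [Aa [c Cc [u Uu ea]]]]] := filter_neq0 cH.1 HXtrace.
  apply: (convexI cC (convex_addset cX cU) (z := c)); split=> //.
  by exists a => //; exists (- u); [apply: absconvexN | rewrite -ea addrK].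
- move=> _ _ [C1 cC1 [Y1 tY1 <-]] [C2 cC2 [Y2 tY2 <-]].
  have [C cC C12] := convex_membersI cFl cC1 cC2.
  have [Y tY Y12] := thickeningsI cH tY1 tY2.
  exists (C `&` Y); first by exists C => //; exists Y.
  by move=> x [/C12[C1x C2x] /Y12[Y1x Y2x]].
Qed.

Theorem c_precompact_closure A :
  c_precompact abs p A -> c_precompact abs p (na_closure p A).
Proof.
move=> [hA Aprecompact]; split; first exact: absconvex_closure.
move=> Fl [cFl Flmax]; have [[_ FlS _ _ _] Flconvex] := cFl.
have [H Hmax traceH] := exists_max_convex_filter (convex_filter_closure_trace hA cFl).
have cH := Hmax.1.
have baseE : filter_of_base (na_closure p A)
    [set C `&` Y | C in convex_members Fl & Y in thickenings (convex_members H)] = Fl.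
  apply: Flmax (convex_filter_closure_base cFl cH traceH) _ => C FlC.
  split; first exact: FlS.
  have [C' cC' C'C] := Flconvex C FlC; have [Y tY] := thickenings_neq0 cH.
  by exists (C' `&` Y); [exists C' => //; exists Y | move=> x [/C'C]].
have [C0 cC0] := convex_members_neq0 cFl.
move=> U /absconvex_zero_nbhd_sub[V [nV cV] VU].
have [X HX XV] := Aprecompact H Hmax V nV.
have [X' cX' X'X] := cH.2 X HX.
exists (C0 `&` addset X' V).
  rewrite -baseE; split; first by move=> x [/(FlS C0 cC0.1)].
  exists (C0 `&` addset X' V) => //; exists C0 => //.
  by exists (addset X' V) => //; exists X' => //; exists V.
move=> _ _ [_ [x1 X'x1 [v1 Vv1 <-]]] [_ [x2 X'x2 [v2 Vv2 <-]]].
apply: VU; rewrite opprD addrACA.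
exact: absconvexD cV (XV _ _ (X'X _ X'x1) (X'X _ X'x2)) (absconvexB cV Vv1 Vv2).
Qed.

End SeminormTopology.

Section Image.
Variables (E F : lmodType K) (IE IF : Type) (pE : IE -> E -> R) (pF : IF -> F -> R).
Variable f : {linear E -> F}.

Lemma convex_filter_preimage A Fl : na_absconvex abs A ->
  na_convex_filter abs (f @` A) Fl ->
  na_convex_filter abs A
    (filter_of_base A [set A `&` f @^-1` C | C in convex_members Fl]).
Proof.
move=> hA cFl; have [[_ FlS _ _ _] _] := cFl; apply: convex_filter_of_base.
- by have [C cC] := convex_members_neq0 cFl; exists (A `&` f @^-1` C), C.
- by move=> _ [C _ <-] x [].
- move=> _ [C [FlC cC] <-]; have [y Cy] := filter_neq0 cFl.1 FlC.
  have [a Aa fay] := FlS C FlC y Cy; rewrite -fay in Cy.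
  exact: convexI (absconvex_convex hA) (convex_preimage cC Cy) (conj Aa Cy).
- move=> _ _ [C1 cC1 <-] [C2 cC2 <-]; have [C cC C12] := convex_membersI cFl cC1 cC2.
  by exists (A `&` f @^-1` C); [exists C | move=> x [Ax /C12[]]].
Qed.

Lemma convex_filter_image A H : na_convex_filter abs A H ->
  na_convex_filter abs (f @` A)
    (filter_of_base (f @` A) [set f @` X | X in convex_members H]).
Proof.
move=> cH; have [[_ HS _ _ _] _] := cH; apply: convex_filter_of_base.
- by have [X cX] := convex_members_neq0 cH; exists (f @` X), X.
- by move=> _ [X [HX _] <-]; apply: image_subset; apply: HS.
- by move=> _ [X [_ cX] <-]; apply: convex_image.
- move=> _ _ [X1 cX1 <-] [X2 cX2 <-]; have [X cX X12] := convex_membersI cH cX1 cX2.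
  by exists (f @` X); [exists X | move=> _ [x /X12[X1x X2x] <-]; split; exists x].
Qed.

Theorem c_precompact_image A : na_continuous pE pF f ->
  c_precompact abs pE A -> c_precompact abs pF (f @` A).
Proof.
move=> fcont [hA Aprecompact]; split; first exact: absconvex_image.
move=> Fl [cFl Flmax]; have [[_ FlS _ _ _] Flconvex] := cFl.
have [H Hmax pullH] := exists_max_convex_filter (convex_filter_preimage hA cFl).
have cH := Hmax.1; have [[_ HS _ _ _] HC] := cH.
have imageE : filter_of_base (f @` A) [set f @` X | X in convex_members H] = Fl.
  apply: Flmax (convex_filter_image cH) _ => C FlC.
  split; first exact: FlS.
  have [C' cC' C'C] := Flconvex C FlC.
  have [X cX XC'] : exists2 X, convex_members H X & X `<=` A `&` f @^-1` C'.
    apply: HC; apply: pullH; split; first by move=> x [].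
    by exists (A `&` f @^-1` C'); first exists C'.
  by exists (f @` X); [exists X | move=> _ [x /XC'[_ /C'C ?] <-]].
move=> U /(fcont 0)[V nV VU].
have [X HX XV] := Aprecompact H Hmax V nV.
have [X' cX' X'X] := HC X HX.
exists (f @` X').
  rewrite -imageE; split; first by apply: image_subset; apply: HS cX'.1.
  by exists (f @` X') => //; exists X'.
move=> _ _ [x X'x <-] [y X'y <-].
have := VU (x - y); rewrite !subr0 linear0 subr0 linearB; apply.
exact: XV (X'X _ X'x) (X'X _ X'y).
Qed.

End Image.

End NonArchimedean.

Theorem mainTheorem1 (R : realType) (K : fieldType) (absK : K -> R)
  (hK1 : nonarch_abs absK) (hK2 : nontrivial_abs absK) (hK3 : complete_abs absK)
  (E F : lmodType K) (IE IF : Type)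
  (pE : IE -> E -> R) (pF : IF -> F -> R)
  (hpE : forall i, nonarch_seminorm absK (pE i))
  (hpF : forall i, nonarch_seminorm absK (pF i))
  (A : set E) (hA : c_precompact absK pE A) :
  (forall f : {linear E -> F}, na_continuous pE pF f ->
     c_precompact absK pF (f @` A)) /\
  c_precompact absK pE (na_closure pE A).
Proof.
split=> [f fcont|]; first exact: (c_precompact_image hK1 fcont hA).
exact: (c_precompact_closure hK1 hpE hA).
Qed.
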